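(* Consider a Boolean control network $\mathbf{x}(t+1)=L\ltimes\mathbf{u}(t)\ltimes\mathbf{x}(t)$, $\mathbf{y}(t)=H\mathbf{x}(t)$, $t\in\mathbb{Z}_+$, with $L\in\mathcal{L}_{N\times NM}$, $H\in\mathcal{L}_{P\times N}$, and a periodic reference output trajectory of minimal period $T\ge1$ given by $\mathbf{y}_r(s+kT)=\delta_P^{i_s}$ for $s\in[1,T]$, $k\in\mathbb{Z}_+$. The following are equivalent: (i) the periodic trajectory is trackable from every $\mathbf{x}_0\in\mathcal{L}_N$, i.e. for every $\mathbf{x}_0$ there is an infinite input sequence $\{\mathbf{u}(t)\}_{t\in\mathbb{Z}_+}\subset\mathcal{L}_M$ such that the resulting state trajectory with $\mathbf{x}(0)=\mathbf{x}_0$ satisfies $H\mathbf{x}(t)=\mathbf{y}_r(t)$ for all $t\ge1$; (ii) the finite-length trajectory $\{\mathbf{y}_r(t)\}_{t=1}^T$ is trackable from every $\mathbf{x}_0\in\mathcal{L}_N$, i.e. for every $\mathbf{x}_0$ there are inputs $\mathbf{u}(0),\dots,\mathbf{u}(T-1)\in\mathcal{L}_M$ such that $H\mathbf{x}(t)=\mathbf{y}_r(t)$ for all $t\in[1,T]$.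
   Context: $\delta_k^i$ is the $i$-th canonical vector of $\mathbb{R}^k$; $\mathcal{L}_k$ is the set of canonical vectors of $\mathbb{R}^k$; $\mathcal{L}_{k\times q}$ the set of $k\times q$ matrices whose columns are in $\mathcal{L}_k$. $N=2^n$, $M=2^m$, $P=2^p$. Writing $L=[L_1|\cdots|L_M]$ with $L_i\in\mathcal{L}_{N\times N}$, one has $L\ltimes\delta_M^i\ltimes\mathbf{x}=L_i\mathbf{x}$ for $\mathbf{x}\in\mathcal{L}_N$. *)

From mathcomp Require Import all_boot.
Set Implicit Arguments. Unset Strict Implicit. Unset Printing Implicit Defensive.

(* Logical matrices: a matrix A in L_{k x q} (all columns canonical vectors of
   R^k) is represented by the finite function mapping column index j : 'I_q
   to the (0-based) row index of its unique 1, i.e. Col_j(A) = delta_k^{A j + 1}.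
   A canonical vector delta_k^{i+1} is represented by i : 'I_k. *)
Definition logical_mx (k q : nat) := {ffun 'I_q -> 'I_k}.

(* Semi-tensor product of canonical vectors:
   delta_M^{u+1} |x delta_N^{x+1} = delta_{NM}^{u*N + x + 1}. *)
Lemma stp_index_proof (N M : nat) (u : 'I_M) (x : 'I_N) : u * N + x < N * M.
Proof.
case: u => u /= hu; case: x => x /= hx.
have h1 : u * N + x < u * N + N by rewrite ltn_add2l.
apply: (leq_trans h1).
by rewrite -mulSnr mulnC leq_mul2l hu orbT.
Qed.

Definition stp_index (N M : nat) (u : 'I_M) (x : 'I_N) : 'I_(N * M) :=
  Ordinal (stp_index_proof u x).

Definition bcn_step (N M : nat) (L : logical_mx N (N * M)) (u : 'I_M) (x : 'I_N)
  : 'I_N := L (stp_index u x).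

Fixpoint bcn_traj (N M : nat) (L : logical_mx N (N * M)) (x0 : 'I_N)
  (u : nat -> 'I_M) (t : nat) : 'I_N :=
  match t with
  | 0 => x0
  | t'.+1 => bcn_step L (u t') (bcn_traj L x0 u t')
  end.

Definition bcn_out (P N : nat) (H : logical_mx P N) (x : 'I_N) : 'I_P := H x.

(* Periodic reference output: y_r(s + kT) = delta_P^{i_s}, s in [1,T];
   here ir : 'I_T -> 'I_P with ir (s-1) the (0-based) index i_s - 1. *)
Definition ref_out (P T : nat) (ir : 'I_T -> 'I_P) (hT : 0 < T) (t : nat) : 'I_P :=
  ir (Ordinal (@ltn_pmod (t.-1) T hT)).

Definition minimal_period (P : nat) (yr : nat -> 'I_P) (T : nat) : Prop :=
  0 < T /\ (forall t, 1 <= t -> yr (t + T) = yr t) /\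
  (forall T', 0 < T' < T -> exists2 t, 1 <= t & yr (t + T') <> yr t).

From mathcomp Require Import all_boot.

Set Implicit Arguments.
Unset Strict Implicit.
Unset Printing Implicit Defensive.

(* Tracking the finite reference y_r(1), ..., y_r(T) from every state is
   enough to track the periodic one: apply the finite-horizon input that works
   from the current state x(kT) on each block [kT, (k+1)T), and use that the
   reference restarts at time kT.  The state space being finite, choosing one
   finite-horizon input per initial state needs no choice principle. *)

Section BcnTrajectory.
Variables (N M : nat) (L : logical_mx N (N * M)).

Lemma bcn_trajD (x0 : 'I_N) (u : nat -> 'I_M) (s t : nat) :
  bcn_traj L x0 u (s + t) =
  bcn_traj L (bcn_traj L x0 u s) (fun i => u (s + i)) t.
Proof. by elim: t => [|t IHt]; rewrite ?addn0 // addnS /= IHt. Qed.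

Lemma eq_bcn_traj (x0 : 'I_N) (u v : nat -> 'I_M) (t : nat) :
  (forall i, i < t -> u i = v i) -> bcn_traj L x0 u t = bcn_traj L x0 v t.
Proof.
elim: t => [|t IHt] // eq_uv /=.
by rewrite eq_uv // IHt // => i lt_it; rewrite eq_uv // ltnW.
Qed.

Variables (T : nat) (g : 'I_N -> nat -> 'I_M) (x0 : 'I_N).

Fixpoint block_state (k : nat) : 'I_N :=
  if k is k'.+1 then bcn_traj L (block_state k') (g (block_state k')) T
  else x0.

Definition block_input (t : nat) : 'I_M := g (block_state (t %/ T)) (t %% T).

Hypothesis T_gt0 : 0 < T.

Lemma block_input_shift (k i : nat) :
  i < T -> block_input (k * T + i) = g (block_state k) i.
Proof.
by move=> lt_iT; rewrite /block_input divnMDl // modnMDl divn_small ?modn_small ?addn0.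
Qed.

Lemma bcn_traj_block_input (k r : nat) : r <= T ->
  bcn_traj L x0 block_input (k * T + r) =
  bcn_traj L (block_state k) (g (block_state k)) r.
Proof.
have block_start j : bcn_traj L x0 block_input (j * T) = block_state j.
  elim: j => [|j IHj] //=; rewrite mulSn addnC bcn_trajD IHj.
  by apply: eq_bcn_traj => i lt_iT; rewrite block_input_shift.
move=> le_rT; rewrite bcn_trajD block_start.
by apply: eq_bcn_traj => i lt_ir; rewrite block_input_shift // (leq_trans lt_ir).
Qed.

End BcnTrajectory.

Lemma ref_out_periodic (P T : nat) (ir : 'I_T -> 'I_P) (hT : 0 < T) (k r : nat) :
  0 < r -> ref_out ir hT (k * T + r) = ref_out ir hT r.
Proof.
move=> r_gt0; rewrite /ref_out; congr ir; apply: val_inj => /=.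
by rewrite -subn1 -addnBA // subn1 modnMDl.
Qed.

Lemma split_block (T t : nat) : 0 < T -> 0 < t ->
  exists k r, 0 < r <= T /\ t = k * T + r.
Proof.
move=> T_gt0 t_gt0; exists (t.-1 %/ T), (t.-1 %% T).+1.
by rewrite ltn_pmod // addnS -divn_eq prednK.
Qed.

Theorem proposition1 (n m p T : nat) (hT : 0 < T)
  (L : logical_mx (2 ^ n) (2 ^ n * 2 ^ m)) (H : logical_mx (2 ^ p) (2 ^ n))
  (ir : 'I_T -> 'I_(2 ^ p)) :
  minimal_period (ref_out ir hT) T ->
  ((forall x0 : 'I_(2 ^ n), exists u : nat -> 'I_(2 ^ m),
      forall t, 1 <= t -> bcn_out H (bcn_traj L x0 u t) = ref_out ir hT t)
   <->
   (forall x0 : 'I_(2 ^ n), exists u : nat -> 'I_(2 ^ m),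
      forall t, 1 <= t <= T -> bcn_out H (bcn_traj L x0 u t) = ref_out ir hT t)).
Proof.
move=> _; split=> [track_inf x0 | /fin_all_exists[g track_fin] x0].
  by have [u track_u] := track_inf x0; exists u => t /andP[t_ge1 _]; apply: track_u.
exists (block_input L T g x0) => t t_gt0.
have [k [r [/andP[r_gt0 le_rT] ->]]] := split_block hT t_gt0.
by rewrite ref_out_periodic // bcn_traj_block_input // track_fin // r_gt0.
Qed.
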